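(* Let $\mathcal{D}$ be a domain with area $|\mathcal{D}|>0$, and suppose we have $n_1$ presence observations with feature vectors $x_i\in\mathbb{R}^p$ (indexed by $y_i=1$) and $n_0\ge1$ background observations with feature vectors $x_i\in\mathbb{R}^p$ (indexed by $y_i=0$). Define the numerical IPP log-likelihood $$\ell_{\mathrm{IPP}}(\alpha,\beta)=\sum_{i:y_i=1}\big(\alpha+\beta'x_i\big)-\frac{|\mathcal{D}|}{n_0}\sum_{i:y_i=0}e^{\alpha+\beta'x_i}-\log n_1!,$$ and, for a weight $W>0$, the weighted logistic regression log-likelihood $$\ell_{\mathrm{WLR}}(\eta,\beta)=\sum_{i:y_i=1}\big(\eta+\beta'x_i\big)-\sum_{i}W^{1-y_i}\log\big(1+e^{\eta+\beta'x_i}\big),$$ where the last sum runs over all $n_1+n_0$ observations. Let $J(\beta)$ be any convex penalty, and suppose $\ell_{\mathrm{IPP}}(\alpha,\beta)-J(\beta)$ has a unique maximizer $(\hat\alpha_{\mathrm{IPP}},\hat\beta_{\mathrm{IPP}})$. If, for each $W$, $(\hat\eta_W,\hat\beta_W)$ maximizes $\ell_{\mathrm{WLR}}(\eta,\beta)-J(\beta)$, then $\lim_{W\to\infty}\hat\beta_W=\hat\beta_{\mathrm{IPP}}$.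
   Context: $\ell_{\mathrm{WLR}}$ is the log-likelihood of logistic regression of $y_i$ on $x_i$ in which every background observation ($y_i=0$) receives case weight $W$ and every presence observation receives weight $1$. *)

From HB Require Import structures.
From mathcomp Require Import all_boot all_order all_algebra.
From mathcomp Require Import all_classical all_reals all_analysis.
Set Implicit Arguments. Unset Strict Implicit. Unset Printing Implicit Defensive.
Import Order.TTheory GRing.Theory Num.Theory.
Import numFieldNormedType.Exports.
Local Open Scope ring_scope.

Definition dotp (R : realType) (p : nat) (b x : 'rV[R]_p) : R :=
  \sum_(j < p) b 0 j * x 0 j.

Definition convex_fun (R : realType) (p : nat) (J : 'rV[R]_p -> R) : Prop :=
  forall (u v : 'rV[R]_p) (t : R), 0 <= t -> t <= 1 ->
    J (t *: u + (1 - t) *: v) <= t * J u + (1 - t) * J v.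

Definition ell_IPP (R : realType) (p n1 n0 : nat) (A : R)
  (x1 : 'I_n1 -> 'rV[R]_p) (x0 : 'I_n0 -> 'rV[R]_p) (alpha : R) (beta : 'rV[R]_p) : R :=
  \sum_(i < n1) (alpha + dotp beta (x1 i))
  - A / n0%:R * \sum_(i < n0) expR (alpha + dotp beta (x0 i))
  - ln (n1`!)%:R.

(* weighted logistic regression log-likelihood: weight W^(1-y_i), i.e. 1 for
   presences and W for background points *)
Definition ell_WLR (R : realType) (p n1 n0 : nat) (W : R)
  (x1 : 'I_n1 -> 'rV[R]_p) (x0 : 'I_n0 -> 'rV[R]_p) (eta : R) (beta : 'rV[R]_p) : R :=
  \sum_(i < n1) (eta + dotp beta (x1 i))
  - (\sum_(i < n1) ln (1 + expR (eta + dotp beta (x1 i)))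
     + \sum_(i < n0) W * ln (1 + expR (eta + dotp beta (x0 i)))).

From HB Require Import structures.
From mathcomp Require Import all_boot all_order all_algebra.
From mathcomp Require Import all_classical all_reals all_analysis.
From mathcomp Require Import ring lra.
Set Implicit Arguments.
Unset Strict Implicit.
Unset Printing Implicit Defensive.

Import Order.TTheory GRing.Theory Num.Theory.
Import numFieldNormedType.Exports.
Local Open Scope classical_set_scope.
Local Open Scope ring_scope.

(* Put [alpha = eta + ln (W n0 / A)] in the weighted logistic likelihood and add a
   constant.  With [K = W n0 / A], each presence term then differs from its IPP
   counterpart by [ln (1 + e / K) <= e / K], and each background term
   [W ln (1 + e / K)] differs from [(A / n0) e = W (e / K)] by at most [W (e / K)^2],
   so the reparametrised WLR objective is a concave function within O(1/W) of the
   IPP objective, uniformly on bounded sets.  A convex penalty is continuous, hence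
   on the sphere of radius [eps] around the unique IPP maximiser the IPP objective
   stays below its maximum by a positive gap; once the O(1/W) error is smaller than
   that gap, concavity forbids the WLR maximiser from lying outside the sphere. *)

Section ConvexContinuity.
Variable R : realType.

Lemma convex_fun_avg (p n : nat) (J : 'rV[R]_p -> R) (v : 'I_n.+1 -> 'rV[R]_p) :
  convex_fun J ->
  J (n.+1%:R^-1 *: \sum_(i < n.+1) v i) <= n.+1%:R^-1 * \sum_(i < n.+1) J (v i).
Proof.
move=> cJ; elim: n v => [|n IH] v; first by rewrite !big_ord1 invr1 scale1r mul1r.
rewrite big_ord_recr [X in _ <= _ * X]big_ord_recr /=.
set S := \sum_(i < n.+1) _; set SJ := \sum_(i < n.+1) _.
set t : R := n.+2%:R^-1.
have t01 : 0 <= t <= 1 by rewrite invr_ge0 ler0n invf_le1 ?ler1n ?ltr0n.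
have [t0 t1] := andP t01.
have n1 : n.+1%:R != 0 :> R by rewrite pnatr_eq0.
have n2 : n.+1%:R + 1 != 0 :> R by rewrite natr1 pnatr_eq0.
have tE : (1 - t) * n.+1%:R^-1 = t by rewrite /t -natr1; field; apply/andP; split.
have -> : t *: (S + v ord_max) = t *: v ord_max + (1 - t) *: (n.+1%:R^-1 *: S).
  by rewrite scalerA tE scalerDr addrC.
apply: le_trans (cJ _ _ _ t0 t1) _.
have t1' : 0 <= 1 - t by rewrite subr_ge0.
have := ler_wpM2l t1' (IH (fun i => v (widen_ord (leqnSn n.+1) i))).
by rewrite mulrA tE mulrDr [t * _ + _]addrC lerD2r.
Qed.

Lemma convex_fun_segment_bound (p : nat) (J : 'rV[R]_p -> R) (u w : 'rV[R]_p) (s : R) :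
  convex_fun J -> `|s| <= 1 ->
  J (u + s *: w) <= J u + `|s| * (`|J (u + w) - J u| + `|J (u - w) - J u|).
Proof.
move=> cJ s1.
have n1 := ler_norm (J (u + w) - J u); have n2 := ler_norm (J (u - w) - J u).
have n1' := normr_ge0 (J (u + w) - J u); have n2' := normr_ge0 (J (u - w) - J u).
have [s0|s0] := leP 0 s.
  rewrite ger0_norm // in s1 *.
  have -> : u + s *: w = s *: (u + w) + (1 - s) *: u.
    by apply/rowP => i; rewrite !mxE; ring.
  apply: le_trans (cJ _ _ _ s0 s1) _; nra.
rewrite ltr0_norm // in s1 *.
have -> : u + s *: w = (- s) *: (u - w) + (1 - - s) *: u.
  by apply/rowP => i; rewrite !mxE; ring.
have s0' : 0 <= - s by rewrite oppr_ge0 ltW.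
apply: le_trans (cJ _ _ _ s0' s1) _; nra.
Qed.

Lemma mx_norm_entry_le (q : nat) (h : 'rV[R]_q) (j : 'I_q) : `|h 0 j| <= `|h|.
Proof.
rewrite [leRHS]/Num.norm /= mx_normrE.
by apply/bigmax_geP; right => /=; exists (0, j).
Qed.

(* [u + h] is the average of the points [u + h_j *: ((q+1) e_j)], each within unit
   parameter of [u] on the line through [u] in direction [(q+1) e_j]. *)
Lemma convex_fun_local_ub (q : nat) (J : 'rV[R]_q -> R) (u : 'rV[R]_q) :
  convex_fun J ->
  exists2 M, 0 <= M & forall h, `|h| <= 1 -> J (u + h) <= J u + `|h| * M.
Proof.
case: q J u => [|q] J u cJ.
  by exists 0 => // h _; rewrite (thinmx0 h) addr0 mulr0 addr0.
set k : R := q.+1%:R; have k0 : k != 0 by rewrite pnatr_eq0.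
pose e (j : 'I_q.+1) : 'rV[R]_q.+1 := k *: delta_mx 0 j.
pose Mj j := `|J (u + e j) - J u| + `|J (u - e j) - J u|.
have Mj0 j : 0 <= Mj j by rewrite addr_ge0.
exists (\sum_j Mj j) => [|h h1]; first exact: sumr_ge0.
have -> : u + h = k^-1 *: \sum_(j < q.+1) (u + h 0 j *: e j).
  rewrite big_split /= sumr_const card_ord -scaler_nat.
  have -> : \sum_(j < q.+1) h 0 j *: e j = k *: h.
    rewrite [in RHS](row_sum_delta h) scaler_sumr; apply: eq_bigr => j _.
    by rewrite /e !scalerA mulrC.
  by rewrite scalerDr !scalerA mulVf // !scale1r.
apply: le_trans (convex_fun_avg _ cJ) _.
have Bj j : J (u + h 0 j *: e j) <= J u + `|h| * \sum_j Mj j.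
  have hj := mx_norm_entry_le h j.
  apply: le_trans (convex_fun_segment_bound u (e j) cJ (le_trans hj h1)) _.
  rewrite lerD2l ler_pM // (bigD1 j) //= lerDl.
  exact: sumr_ge0.
apply: le_trans (ler_wpM2l _ (ler_sum _ (fun j _ => Bj j))) _.
  by rewrite invr_ge0.
by rewrite sumr_const card_ord -[X in _ * X]mulr_natl mulrA mulVf // mul1r.
Qed.

Lemma convex_fun_local_lipschitz (q : nat) (J : 'rV[R]_q -> R) (u : 'rV[R]_q) :
  convex_fun J ->
  exists2 M, 0 <= M & forall h, `|h| <= 1 -> `|J (u + h) - J u| <= `|h| * M.
Proof.
move=> cJ; have [M M0 HM] := convex_fun_local_ub u cJ.
exists M => // h h1.
have up := HM h h1; have := HM (- h); rewrite normrN => /(_ h1) down.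
have mid : J u <= 2^-1 * J (u + h) + (1 - 2^-1) * J (u + - h).
  have {1}-> : u = 2^-1 *: (u + h) + (1 - 2^-1) *: (u + - h).
    by apply/rowP => i; rewrite !mxE; field.
  by apply: cJ; rewrite ?invr_ge0 ?invf_le1 ?ler1n.
rewrite ler_norml; apply/andP; split; lra.
Qed.

Lemma convex_fun_continuous (q : nat) (J : 'rV[R]_q -> R) :
  convex_fun J -> continuous J.
Proof.
move=> cJ u; have [M M0 HM] := convex_fun_local_lipschitz u cJ.
apply/(@cvgrPdist_lt _ _ _ (nbhs u) _ J (J u)) => eps eps0.
have d0 : 0 < Num.min 1 (eps / (M + 1)) by rewrite lt_min ltr01 divr_gt0 // ltr_wpDl.
apply: filterS (nbhs_ball_norm u (PosNum d0)) => v /=.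
rewrite lt_min -(distrC v) => /andP[/ltW uv1 uvM].
have := HM (v - u) uv1; rewrite addrCA subrr addr0 distrC => /le_lt_trans; apply.
move: uvM; rewrite ltr_pdivlMr ?ltr_wpDl // => uvM.
have := normr_ge0 (v - u); nra.
Qed.
End ConvexContinuity.

Section Softplus.
Variable R : realType.

Lemma expR_convex (t a b : R) : 0 <= t -> t <= 1 ->
  expR (t * a + (1 - t) * b) <= t * expR a + (1 - t) * expR b.
Proof. by move=> t0 t1; have := @convex_expR R (Itv01 t0 t1) a b; rewrite !convRE. Qed.

Definition softplus (s : R) := ln (1 + expR s).

Lemma softplus_gt0 (s : R) : 0 < 1 + expR s.
Proof. by rewrite ltr_wpDr ?expR_ge0. Qed.

Lemma expR_softplus (s : R) : expR (softplus s) = 1 + expR s.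
Proof. by rewrite lnK // posrE softplus_gt0. Qed.

(* The two weights [expR (s - softplus s)] and [expR (- softplus s)] sum to one, so
   the convexity of [expR] applied to each of them bounds [1 + expR] of a convex
   combination by [expR] of the combination of the softplus values. *)
Lemma softplus_convex (t a b : R) : 0 <= t -> t <= 1 ->
  softplus (t * a + (1 - t) * b) <= t * softplus a + (1 - t) * softplus b.
Proof.
move=> t0 t1; set T := t * softplus a + (1 - t) * softplus b.
have split1 s : expR (s - softplus s) + expR (- softplus s) = 1.
  by rewrite expRD expRN expR_softplus; field; rewrite gt_eqF ?softplus_gt0.
have h1 := expR_convex (a - softplus a) (b - softplus b) t0 t1.
have h2 := expR_convex (- softplus a) (- softplus b) t0 t1.
have : (1 + expR (t * a + (1 - t) * b)) * expR (- T) <= 1.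
  have -> : (1 + expR (t * a + (1 - t) * b)) * expR (- T) =
      expR (t * (a - softplus a) + (1 - t) * (b - softplus b))
    + expR (t * - softplus a + (1 - t) * - softplus b).
    by rewrite mulrDl mul1r -expRD addrC /T; congr (expR _ + expR _); ring.
  apply: le_trans (lerD h1 h2) _; rewrite addrACA -!mulrDr !split1; lra.
rewrite expRN ler_pdivrMr ?expR_gt0 // mul1r -ler_expR /softplus lnK //.
by rewrite posrE softplus_gt0.
Qed.

Lemma ln1D_ge (u : R) : 0 <= u -> u - u ^+ 2 <= ln (1 + u).
Proof.
move=> u0; have pu : 0 < 1 + u by lra.
have : ln ((1 + u)^-1) <= (1 + u)^-1 - 1.
  have := @le_ln1Dx R ((1 + u)^-1 - 1); rewrite addrCA subrr addr0; apply.
  have : 0 < (1 + u)^-1 by rewrite invr_gt0.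
  lra.
rewrite lnV ?posrE // => h.
suff : u - u ^+ 2 <= 1 - (1 + u)^-1 by lra.
have -> : 1 - (1 + u)^-1 = u / (1 + u) by field; rewrite gt_eqF.
rewrite ler_pdivlMr //; have : 0 <= u ^+ 3 by rewrite exprn_ge0.
rewrite !exprS expr0; nra.
Qed.
End Softplus.

Section ArgmaxStability.
Variable R : realType.

Lemma compact_max_gap (T : topologicalType) (f : T -> R) (S : set T) (m : R) :
  S !=set0 -> compact S -> {within S, continuous f} ->
  (forall y, S y -> f y < m) -> exists2 del, 0 < del & forall y, S y -> f y + del <= m.
Proof.
move=> S0 cS cf fm; have [c /set_mem Sc cmax] := compact_EVT_max S0 cS cf.
exists (m - f c) => [|y Sy]; first by rewrite subr_gt0 fm.
have := cmax y (mem_set Sy); lra.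
Qed.

(* If [w] beat [z] for [g] while lying outside the sphere of radius [eps] around [z],
   concavity would carry the value [g z] onto that sphere along the segment [z w],
   where [g] is too small. *)
Lemma concave_argmax_near (V : normedModType R) (f g : V -> R) (z w : V)
    (eps del c1 c2 : R) :
  0 < eps -> c1 + c2 < del ->
  (forall y, `|z - y| = eps -> f y + del <= f z) ->
  (forall y, `|z - y| = eps -> g y <= f y + c2) ->
  f z - c1 <= g z -> g z <= g w ->
  (forall t, 0 <= t -> t <= 1 -> t * g w + (1 - t) * g z <= g (t *: w + (1 - t) *: z)) ->
  `|z - w| < eps.
Proof.
move=> eps0 c12 gap gf_sph gf_z gw gcvx; rewrite ltNge; apply/negP => epsN.
have N0 : 0 < `|z - w| by exact: lt_le_trans epsN.
set lam := eps / `|z - w|.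
have lam0 : 0 <= lam by rewrite divr_ge0 ?ltW.
have lam1 : lam <= 1 by rewrite ler_pdivrMr // mul1r.
set y := lam *: w + (1 - lam) *: z.
have yS : `|z - y| = eps.
  have -> : z - y = lam *: (z - w).
    by rewrite /y scalerBl scale1r scalerBr opprD opprB addrA addrC addrA subrK.
  by rewrite normrZ ger0_norm // /lam divfK // gt_eqF.
have gy : g z <= g y.
  apply: le_trans (gcvx _ lam0 lam1).
  have := mulr_ge0 lam0 (_ : 0 <= g w - g z); rewrite subr_ge0 => /(_ gw); lra.
have := gap y yS; have := gf_sph y yS; lra.
Qed.
End ArgmaxStability.

Lemma sphere_compact (R : realType) (p : nat) (z : R^o * 'rV[R]_p) (e : R) :
  0 < e -> compact [set y | `|z - y| = e].
Proof.
move=> e0.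
have cQ : compact (closed_ball_ Num.norm z.2 e).
  apply: bounded_closed_compact; last exact: closed_closed_ball_.
  exists (`|z.2| + e); split; first by rewrite realE addr_ge0 // ltW.
  move=> M hM y; rewrite /closed_ball_ /= => hy; apply: le_trans (ltW hM).
  have := ler_normB z.2 (z.2 - y); rewrite subKr; lra.
apply: subclosed_compact (compact_setX (@segment_compact _ (z.1 - e) (z.1 + e)) cQ) _.
  rewrite -/((Num.norm \o (fun y => z - y)) @^-1` [set x | x = e]).
  apply: (preimage_closed _ (@closed_eq _ _)) => y _.
  apply: (continuous_comp _ (@norm_continuous _ _ _)).
  exact: (continuousB (@cst_continuous _ _ _ _)).
move=> y /= /eqP; rewrite prod_normE eq_le ge_max => /andP[/andP[y1 y2] _].
by split; rewrite // in_itv /= -ler_distlC.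
Qed.

Section Likelihoods.
Variables (R : realType) (p n1 n0 : nat) (A : R).
Variables (x1 : 'I_n1 -> 'rV[R]_p) (x0 : 'I_n0 -> 'rV[R]_p).
Hypotheses (A_gt0 : 0 < A) (n0_gt0 : (0 < n0)%N).

Local Notation Z := (R^o * 'rV[R]_p)%type.

Definition linpred (z : Z) (x : 'rV[R]_p) : R := z.1 + dotp z.2 x.

Lemma dotpD_scale (t s : R) (b b' x : 'rV[R]_p) :
  dotp (t *: b + s *: b') x = t * dotp b x + s * dotp b' x.
Proof.
rewrite /dotp !mulr_sumr -big_split; apply: eq_bigr => j _.
by rewrite !mxE mulrDl !mulrA.
Qed.

Lemma ell_WLR_concave (W t e e' : R) (b b' : 'rV[R]_p) : 0 <= W -> 0 <= t -> t <= 1 ->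
  t * ell_WLR W x1 x0 e b + (1 - t) * ell_WLR W x1 x0 e' b'
  <= ell_WLR W x1 x0 (t * e + (1 - t) * e') (t *: b + (1 - t) *: b').
Proof.
move=> W0 t0 t1.
have combE (x : 'rV[R]_p) : t * e + (1 - t) * e' + dotp (t *: b + (1 - t) *: b') x =
    t * (e + dotp b x) + (1 - t) * (e' + dotp b' x).
  by rewrite dotpD_scale; ring.
have sp_sum n (x : 'I_n -> 'rV[R]_p) :
    \sum_(i < n) softplus (t * e + (1 - t) * e' + dotp (t *: b + (1 - t) *: b') (x i))
    <= t * \sum_(i < n) softplus (e + dotp b (x i))
       + (1 - t) * \sum_(i < n) softplus (e' + dotp b' (x i)).
  rewrite !mulr_sumr -big_split; apply: ler_sum => i _.
  by rewrite combE; apply: softplus_convex.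
have lin_sum : \sum_(i < n1) (t * e + (1 - t) * e' + dotp (t *: b + (1 - t) *: b') (x1 i))
    = t * \sum_(i < n1) (e + dotp b (x1 i)) + (1 - t) * \sum_(i < n1) (e' + dotp b' (x1 i)).
  by rewrite !mulr_sumr -big_split; apply: eq_bigr => i _; rewrite combE.
have := sp_sum _ x1; have := ler_wpM2l W0 (sp_sum _ x0).
rewrite /ell_WLR lin_sum -!mulr_sumr /softplus; nra.
Qed.

Lemma linpred_continuous (x : 'rV[R]_p) : continuous (linpred ^~ x).
Proof.
move=> z; apply: cvgD; first exact: cvg_fst.
apply: continuous_big => [|j _ {}z]; first exact: add_continuous.
apply: cvgMr_tmp.
apply: (@continuous_comp _ _ _ snd (fun b : 'rV[R]_p => b 0 j)); first exact: cvg_snd.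
exact: coord_continuous.
Qed.

Lemma expR_linpred_continuous (x : 'rV[R]_p) : continuous (fun z => expR (linpred z x)).
Proof.
by move=> z; apply: continuous_comp; [exact: linpred_continuous | exact: continuous_expR].
Qed.

Lemma ell_IPP_continuous : continuous (fun z : Z => ell_IPP A x1 x0 z.1 z.2).
Proof.
move=> z; apply: cvgB; last exact: cvg_cst.
apply: cvgB; first by apply: continuous_big => [|i _]; [exact: add_continuous |
  exact: linpred_continuous].
apply: cvgMl_tmp; apply: continuous_big => [|i _]; first exact: add_continuous.
exact: expR_linpred_continuous.
Qed.

Definition presence_mass (z : Z) := \sum_(i < n1) expR (linpred z (x1 i)).
Definition background_sqmass (z : Z) := \sum_(i < n0) expR (linpred z (x0 i)) ^+ 2.

Lemma background_sqmass_continuous : continuous background_sqmass.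
Proof.
move=> z; apply: continuous_big => [|i _ {}z]; first exact: add_continuous.
by have := continuous_comp (@expR_linpred_continuous (x0 i) z) (@exprn_continuous R 2 _).
Qed.

Definition wlr_scale (W : R) := W * n0%:R / A.

(* WLR in the IPP intercept [alpha = eta + ln (W n0 / A)], with the constant
   [n1 ln (W n0 / A) - ln n1!] added so that it matches [ell_IPP] up to O(1/W). *)
Definition ell_WLR_shift (W : R) (z : Z) :=
  ell_WLR W x1 x0 (z.1 - ln (wlr_scale W)) z.2
  + n1%:R * ln (wlr_scale W) - ln (n1`!)%:R.

Lemma wlr_scale_gt0 W : 0 < W -> 0 < wlr_scale W.
Proof. by move=> W0; rewrite /wlr_scale divr_gt0 // mulr_gt0 // ltr0n. Qed.

Lemma wlr_scale_large (C del : R) : 0 <= C -> 0 < del ->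
  \forall W \near +oo, 0 < W /\ C / wlr_scale W < del.
Proof.
move=> C0 del0; have n0R : (0 : R) < n0%:R by rewrite ltr0n.
have CW0 : 0 <= C * A / (n0%:R * del).
  by apply: divr_ge0; apply: mulr_ge0 => //; exact: ltW.
apply: filterS (nbhs_pinfty_gt (ger0_real CW0)) => W CW.
have W0 : 0 < W by exact: le_lt_trans CW.
have delK : del * wlr_scale W = W * (n0%:R * del) / A.
  by rewrite /wlr_scale; field; rewrite gt_eqF.
split; rewrite // ltr_pdivrMr ?wlr_scale_gt0 // delK ltr_pdivlMr //.
by move: CW; rewrite ltr_pdivrMr // mulr_gt0.
Qed.

Lemma ell_WLR_shiftE W z : 0 < W ->
  ell_WLR_shift W z = ell_IPP A x1 x0 z.1 z.2
    - \sum_(i < n1) ln (1 + expR (linpred z (x1 i)) / wlr_scale W)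
    + W * \sum_(i < n0) (expR (linpred z (x0 i)) / wlr_scale W
                         - ln (1 + expR (linpred z (x0 i)) / wlr_scale W)).
Proof.
move=> W0; have K0 := wlr_scale_gt0 W0.
rewrite /ell_WLR_shift /ell_WLR /ell_IPP; set K := wlr_scale W.
have expE x : expR (z.1 - ln K + dotp z.2 x) = expR (linpred z x) / K.
  by rewrite /linpred addrAC expRD expRN lnK // posrE.
have lin1 : \sum_(i < n1) (z.1 - ln K + dotp z.2 (x1 i)) =
    \sum_(i < n1) (z.1 + dotp z.2 (x1 i)) - n1%:R * ln K.
  rewrite (eq_bigr (fun i => z.1 + dotp z.2 (x1 i) - ln K)) => [|i _]; last by rewrite addrAC.
  by rewrite sumrB sumr_const card_ord mulr_natl.
have sp1 : \sum_(i < n1) ln (1 + expR (z.1 - ln K + dotp z.2 (x1 i))) =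
    \sum_(i < n1) ln (1 + expR (linpred z (x1 i)) / K).
  by apply: eq_bigr => i _; rewrite expE.
have sp0 : \sum_(i < n0) W * ln (1 + expR (z.1 - ln K + dotp z.2 (x0 i))) =
    W * \sum_(i < n0) ln (1 + expR (linpred z (x0 i)) / K).
  by rewrite mulr_sumr; apply: eq_bigr => i _; rewrite expE.
have mass0 : A / n0%:R * \sum_(i < n0) expR (z.1 + dotp z.2 (x0 i)) =
    W * \sum_(i < n0) (expR (linpred z (x0 i)) / K).
  rewrite !mulr_sumr; apply: eq_bigr => i _; rewrite /K /wlr_scale /linpred.
  by field; rewrite pnatr_eq0 -lt0n n0_gt0 !gt_eqF.
rewrite lin1 sp1 sp0 mass0 sumrB mulrBr; lra.
Qed.

Lemma ell_WLR_shift_ge W z : 0 < W ->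
  ell_IPP A x1 x0 z.1 z.2 - presence_mass z / wlr_scale W <= ell_WLR_shift W z.
Proof.
move=> W0; have K0 := wlr_scale_gt0 W0.
have u0 x : 0 <= expR (linpred z x) / wlr_scale W by rewrite divr_ge0 ?expR_ge0 ?ltW.
have le_ln1D x : ln (1 + expR (linpred z x) / wlr_scale W) <= expR (linpred z x) / wlr_scale W.
  by apply: le_ln1Dx; apply: lt_le_trans (u0 x); rewrite ltrN10.
have h1 : \sum_(i < n1) ln (1 + expR (linpred z (x1 i)) / wlr_scale W)
    <= presence_mass z / wlr_scale W.
  by rewrite /presence_mass mulr_suml; apply: ler_sum => i _.
have h0 : 0 <= W * \sum_(i < n0) (expR (linpred z (x0 i)) / wlr_scale W
                    - ln (1 + expR (linpred z (x0 i)) / wlr_scale W)).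
  apply: mulr_ge0; first exact: ltW.
  by apply: sumr_ge0 => i _; rewrite subr_ge0.
rewrite ell_WLR_shiftE //; lra.
Qed.

Lemma ell_WLR_shift_le W z : 0 < W ->
  ell_WLR_shift W z <= ell_IPP A x1 x0 z.1 z.2 + A / n0%:R / wlr_scale W * background_sqmass z.
Proof.
move=> W0; have K0 := wlr_scale_gt0 W0.
have u0 x : 0 <= expR (linpred z x) / wlr_scale W by rewrite divr_ge0 ?expR_ge0 ?ltW.
have -> : A / n0%:R / wlr_scale W * background_sqmass z =
    W * \sum_(i < n0) (expR (linpred z (x0 i)) / wlr_scale W) ^+ 2.
  rewrite /background_sqmass !mulr_sumr; apply: eq_bigr => i _; rewrite /wlr_scale.
  by field; rewrite pnatr_eq0 -lt0n n0_gt0 !gt_eqF.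
have h1 : 0 <= \sum_(i < n1) ln (1 + expR (linpred z (x1 i)) / wlr_scale W).
  by apply: sumr_ge0 => i _; apply: ln_ge0; rewrite lerDl.
have h0 : W * \sum_(i < n0) (expR (linpred z (x0 i)) / wlr_scale W
                    - ln (1 + expR (linpred z (x0 i)) / wlr_scale W))
    <= W * \sum_(i < n0) (expR (linpred z (x0 i)) / wlr_scale W) ^+ 2.
  rewrite ler_pM2l //; apply: ler_sum => i _.
  have := ln1D_ge (u0 (x0 i)); lra.
rewrite ell_WLR_shiftE //; lra.
Qed.

Variable J : 'rV[R]_p -> R.
Hypothesis J_convex : convex_fun J.

Definition ipp_obj (z : Z) := ell_IPP A x1 x0 z.1 z.2 - J z.2.
Definition wlr_obj (W : R) (z : Z) := ell_WLR_shift W z - J z.2.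

Lemma ipp_obj_continuous : continuous ipp_obj.
Proof.
move=> z; apply: cvgB; first exact: ell_IPP_continuous.
apply: (@continuous_comp _ _ _ snd J); first exact: cvg_snd.
exact: convex_fun_continuous.
Qed.

Lemma wlr_obj_concave W t (z z' : Z) : 0 < W -> 0 <= t -> t <= 1 ->
  t * wlr_obj W z + (1 - t) * wlr_obj W z' <= wlr_obj W (t *: z + (1 - t) *: z').
Proof.
move=> W0 t0 t1; rewrite /wlr_obj /ell_WLR_shift /=.
set L := ln (wlr_scale W).
have -> : t * z.1 + (1 - t) * z'.1 - L = t * (z.1 - L) + (1 - t) * (z'.1 - L) by ring.
have := @ell_WLR_concave W t (z.1 - L) (z'.1 - L) z.2 z'.2 (ltW W0) t0 t1.
have := J_convex z.2 z'.2 t0 t1; lra.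
Qed.

Lemma wlr_argmax_near (zs : Z) (zW : R -> Z) (eps : R) :
  (forall y, y != zs -> ipp_obj y < ipp_obj zs) ->
  (forall W, 0 < W -> forall z, wlr_obj W z <= wlr_obj W (zW W)) ->
  0 < eps -> \forall W \near +oo, `|zs - zW W| < eps.
Proof.
move=> zs_max zW_max eps0.
set S := [set y : Z | `|zs - y| = eps].
have S0 : S !=set0.
  exists (zs - (eps : R^o, 0)); rewrite /S /= subKr prod_normE /= normr0.
  by rewrite gtr0_norm // max_l ?ltW.
have cS : compact S by exact: sphere_compact.
have [del del0 gap] : exists2 del, 0 < del & forall y, S y -> ipp_obj y + del <= ipp_obj zs.
  apply: compact_max_gap S0 cS (continuous_subspaceT ipp_obj_continuous) _ => y Sy.
  apply: zs_max; apply/eqP => yzs; move: Sy; rewrite /S /= yzs subrr normr0.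
  by move=> /esym/eqP; rewrite gt_eqF.
have [m _ mmax] :=
  compact_EVT_max S0 cS (continuous_subspaceT background_sqmass_continuous).
set M := background_sqmass m; set C := presence_mass zs + A / n0%:R * M.
have M0 : 0 <= M by apply: sumr_ge0 => i _; rewrite exprn_ge0 ?expR_ge0.
have C0 : 0 <= C.
  apply: addr_ge0; first by apply: sumr_ge0 => i _; rewrite expR_ge0.
  by rewrite mulr_ge0 // divr_ge0 // ltW.
apply: filterS (wlr_scale_large C0 del0) => W [W0 CW].
have Csmall : presence_mass zs / wlr_scale W + A / n0%:R / wlr_scale W * M < del.
  by rewrite -mulrAC -mulrDl.
apply: (concave_argmax_near eps0 Csmall) (zW_max W W0 zs) _ => [y Sy|y Sy||t t0 t1].
- exact: gap.
- have c0 : 0 <= A / n0%:R / wlr_scale W.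
    exact: divr_ge0 (divr_ge0 (ltW A_gt0) (ler0n _ _)) (ltW (wlr_scale_gt0 W0)).
  have := ler_wpM2l c0 (mmax y (mem_set Sy)); have := ell_WLR_shift_le y W0.
  rewrite /wlr_obj /ipp_obj -/M; lra.
- by have := ell_WLR_shift_ge zs W0; rewrite /wlr_obj /ipp_obj; lra.
- exact: wlr_obj_concave.
Qed.
End Likelihoods.

Theorem proposition2 (R : realType) (p n1 n0 : nat) (A : R)
  (x1 : 'I_n1 -> 'rV[R]_p) (x0 : 'I_n0 -> 'rV[R]_p) (J : 'rV[R]_p -> R)
  (alphaI : R) (betaI : 'rV[R]_p)
  (etaW : R -> R) (betaW : R -> 'rV[R]_p) :
  0 < A -> (0 < n0)%N -> convex_fun J ->
  (forall alpha beta,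
     ell_IPP A x1 x0 alpha beta - J beta <= ell_IPP A x1 x0 alphaI betaI - J betaI) ->
  (forall alpha beta,
     (forall alpha' beta',
        ell_IPP A x1 x0 alpha' beta' - J beta' <= ell_IPP A x1 x0 alpha beta - J beta) ->
     alpha = alphaI /\ beta = betaI) ->
  (forall W, 0 < W -> forall eta beta,
     ell_WLR W x1 x0 eta beta - J beta <= ell_WLR W x1 x0 (etaW W) (betaW W) - J (betaW W)) ->
  betaW W @[W --> +oo] --> betaI.
Proof.
move=> A0 n00 cJ IPP_max IPP_uniq WLR_max.
pose zs : R^o * 'rV[R]_p := (alphaI, betaI).
pose zW W : R^o * 'rV[R]_p := (etaW W + ln (wlr_scale n0 A W), betaW W).
have zs_max y : y != zs -> ipp_obj A x1 x0 J y < ipp_obj A x1 x0 J zs.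
  move=> yzs; rewrite lt_neqAle IPP_max andbT; apply: contra yzs => /eqP yE.
  have : y.1 = alphaI /\ y.2 = betaI.
    by apply: IPP_uniq => a b; rewrite /ipp_obj in yE; rewrite yE.
  by case: y {yE} => a b /= [-> ->].
have zW_max W : 0 < W -> forall z, wlr_obj A x1 x0 J W z <= wlr_obj A x1 x0 J W (zW W).
  move=> W0 z; have := WLR_max W W0 (z.1 - ln (wlr_scale n0 A W)) z.2.
  by rewrite /wlr_obj /ell_WLR_shift /= addrK; lra.
apply/cvgrPdist_lt => eps eps0.
apply: filterS (wlr_argmax_near A0 n00 cJ zs_max zW_max eps0) => W.
by apply: le_lt_trans; rewrite prod_normE le_max lexx orbT.
Qed.
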